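(* Let $\mathcal{K}$ be a commutative ring and $\mathcal{A}$ a (possibly noncommutative) $\mathcal{K}$-ring, regarded as an $\mathcal{A}$-bimodule over itself. If $\Delta_1$ is an $n$-order and $\Delta_2$ an $m$-order $\mathcal{A}$-valued left differential operator on $\mathcal{A}$ (in the sense defined in the context), then the composition $\Delta_1\circ\Delta_2$ is an $(n+m)$-order $\mathcal{A}$-valued left differential operator on $\mathcal{A}$.
   Context: A $\mathcal{K}$-ring is a unital associative $\mathcal{K}$-algebra with $1\neq0$. $\mathrm{Hom}_{\mathcal{K}}(\mathcal{A},\mathcal{A})$ is an $\mathcal{A}$-bimodule via $(a\Phi)(x)=a\Phi(x)$ and $(\Phi\bullet a)(x)=\Phi(ax)$; put $\delta_a\Phi:=a\Phi-\Phi\bullet a$. For such a bimodule $M$ its center is $\{x\in M: ax=x\bullet a\ \forall a\in\mathcal{A}\}$. Define $\mathcal{Z}_0$ = center of $\mathrm{Hom}_{\mathcal{K}}(\mathcal{A},\mathcal{A})$, $\mathcal{I}_0$ = sub-bimodule generated by $\mathcal{Z}_0$; inductively for $r\ge1$, $\mathcal{Z}_r$ = center of the quotient bimodule $\mathrm{Hom}_{\mathcal{K}}(\mathcal{A},\mathcal{A})/\mathcal{I}_{r-1}$, $\overline{\mathcal{Z}}_r$ = sub-bimodule generated by $\mathcal{Z}_r$, and $\mathcal{I}_r$ the sub-bimodule with $\mathcal{I}_r/\mathcal{I}_{r-1}=\overline{\mathcal{Z}}_r$. An $r$-order $\mathcal{A}$-valued (left) differential operator on $\mathcal{A}$ is an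 element of $\mathcal{I}_r$ (Lunts–Rosenberg). *)

From mathcomp Require Import all_boot all_algebra.
Set Implicit Arguments. Unset Strict Implicit. Unset Printing Implicit Defensive.
Import GRing.Theory.
Local Open Scope ring_scope.

(* Hom_K(A,A) is represented by the
   predicate [klinear] on functions A -> A; subsets of Hom_K(A,A) are
   predicates (A -> A) -> Prop. *)
Section LR.
Variables (K : comPzRingType) (A : algType K).

Definition klinear (f : A -> A) : Prop :=
  forall (k : K) (x y : A), f (k *: x + y) = k *: f x + f y.

Definition lact (a : A) (f : A -> A) : A -> A := fun x => a * f x.
Definition ract (f : A -> A) (a : A) : A -> A := fun x => f (a * x).
Definition delta (a : A) (f : A -> A) : A -> A := fun x => a * f x - f (a * x).

(* sub-A-bimodule of Hom_K(A,A) generated by a subset S of Hom_K(A,A):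
   smallest subset containing S, 0, and closed under +, left and right
   actions (closure under negation follows from left action by -1). *)
Inductive gen (S : (A -> A) -> Prop) : (A -> A) -> Prop :=
| gen_in f : S f -> gen S f
| gen0 : gen S (fun _ => 0)
| genD f g : gen S f -> gen S g -> gen S (fun x => f x + g x)
| genL a f : gen S f -> gen S (lact a f)
| genR a f : gen S f -> gen S (ract f a).

Definition Z0 (f : A -> A) : Prop :=
  klinear f /\ forall a : A, lact a f = ract f a.

(* I_0 = gen Z_0 ; I_{r+1} = preimage in Hom of the sub-bimodule of
   Hom/I_r generated by the center Z_{r+1} of Hom/I_r, i.e. the sub-bimodule
   generated by I_r together with all f in Hom with a f - f.a in I_r for all a. *)
Fixpoint diffop (r : nat) : (A -> A) -> Prop :=
  match r with
  | 0 => gen Z0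
  | r'.+1 => gen (fun f => diffop r' f \/
                   (klinear f /\ forall a : A, diffop r' (delta a f)))
  end.
End LR.

From mathcomp Require Import all_boot all_algebra.
From Stdlib Require Import FunctionalExtensionality.
Set Implicit Arguments. Unset Strict Implicit. Unset Printing Implicit Defensive.
Import GRing.Theory.
Local Open Scope ring_scope.

(* Composing with an operator G of order n raises orders by at most n.  Since
   this property is stable under the bimodule operations, it suffices to check
   it on generators G, and then, by induction on the order of the inner
   operator D, on generators D.  Two Leibniz rules do the work:
     G o (a D) = a (G o D) - (delta_a G) o D,
     delta_a (G o H) = (delta_a G) o H + G o (delta_a H).
   The first absorbs the left action on D at the cost of a composition with
   delta_a G, which has one order less; by the second, the composite of
   generators of orders n+1 and m+1 is a generator of order n+m+2.  Central
   operators commute with the left action and with delta_a, so composing with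
   them preserves every order. *)

Section DiffopComposition.
Variables (K : comPzRingType) (A : algType K).
Implicit Types (f g G H D : A -> A) (S : (A -> A) -> Prop) (a x y : A).

Definition diffop_gens (r : nat) : (A -> A) -> Prop :=
  match r with
  | 0 => @Z0 K A
  | r'.+1 => fun f =>
      diffop r' f \/ (klinear f /\ forall a, diffop r' (delta a f))
  end.

Lemma diffop_genE r : diffop r = gen (diffop_gens r).
Proof. by case: r. Qed.

Lemma gen_sub S f g : gen S f -> gen S g -> gen S (f \- g).
Proof.
move=> Sf Sg; have -> : f \- g = f \+ lact (-1) g.
  by extensionality x; rewrite /lact /= mulN1r.
exact: (genD Sf (genL (-1) Sg)).
Qed.

Lemma diffop0 r : diffop r (fun _ : A => 0 : A).
Proof. by rewrite diffop_genE; apply: gen0. Qed.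

Lemma diffopD r f g : diffop r f -> diffop r g -> diffop r (f \+ g).
Proof. by rewrite !diffop_genE; apply: genD. Qed.

Lemma diffopB r f g : diffop r f -> diffop r g -> diffop r (f \- g).
Proof. by rewrite !diffop_genE; apply: gen_sub. Qed.

Lemma diffop_lact r a f : diffop r f -> diffop r (lact a f).
Proof. by rewrite !diffop_genE; apply: genL. Qed.

Lemma diffop_ract r a f : diffop r f -> diffop r (ract f a).
Proof. by rewrite !diffop_genE; apply: genR. Qed.

Lemma diffopS r f : diffop r f -> diffop r.+1 f.
Proof. by move=> rf; apply: gen_in; left. Qed.

Lemma klinearD G : klinear G -> forall x y, G (x + y) = G x + G y.
Proof. by move=> linG x y; have := linG 1 x y; rewrite !scale1r. Qed.

Lemma klinearB G : klinear G -> forall x y, G (x - y) = G x - G y.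
Proof. by move=> linG x y; rewrite addrC -scaleN1r linG scaleN1r addrC. Qed.

Lemma klinear0 G : klinear G -> G 0 = 0.
Proof. by move=> linG; have := klinearB linG 0 0; rewrite !subrr. Qed.

Lemma klinear_comp G H : klinear G -> klinear H -> klinear (G \o H).
Proof. by move=> linG linH k x y; rewrite /= linH linG. Qed.

Lemma Z0_lact G : Z0 G -> forall a x, G (a * x) = a * G x.
Proof. by case=> _ Gc a x; have /(congr1 (@^~ x)) := Gc a. Qed.

Lemma Z0_comp G H : Z0 G -> Z0 H -> Z0 (G \o H).
Proof.
move=> ZG ZH; split; first by apply: klinear_comp; [case: ZG | case: ZH].
by move=> a; extensionality x; rewrite /lact /ract /= (Z0_lact ZH) (Z0_lact ZG).
Qed.

Lemma comp_lact G a f : G \o lact a f = lact a (G \o f) \- (delta a G \o f).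
Proof. by extensionality x; rewrite /lact /delta /= opprB addrC subrK. Qed.

Lemma delta_comp G H a :
  klinear G -> delta a (G \o H) = (delta a G \o H) \+ (G \o delta a H).
Proof.
by move=> linG; extensionality x; rewrite /delta /= (klinearB linG) addrA subrK.
Qed.

Lemma delta_comp_Z0l G H a : Z0 G -> delta a (G \o H) = G \o delta a H.
Proof.
move=> ZG; have linG : klinear G by case: ZG.
by extensionality x; rewrite /delta /= (klinearB linG) (Z0_lact ZG).
Qed.

Lemma delta_comp_Z0r G H a : Z0 H -> delta a (G \o H) = delta a G \o H.
Proof. by move=> ZH; extensionality x; rewrite /delta /= (Z0_lact ZH). Qed.

Lemma diffop_comp_ind k r G :
  klinear G ->
  (forall a f, diffop r f -> diffop k (G \o f) -> diffop k (G \o lact a f)) ->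
  (forall H, diffop_gens r H -> diffop k (G \o H)) ->
  forall D, diffop r D -> diffop k (G \o D).
Proof.
move=> linG lactS gensS D rD.
have {rD} : gen (diffop_gens r) D by rewrite -diffop_genE.
elim=> {D} [H /gensS // | | f g _ Gf _ Gg | a f rf Gf | a f _ Gf].
- have -> : G \o (fun _ => 0) = fun _ : A => 0.
    by extensionality x; rewrite /= (klinear0 linG).
  exact: diffop0.
- have -> : G \o (f \+ g) = (G \o f) \+ (G \o g).
    by extensionality x; rewrite /= (klinearD linG).
  exact: diffopD.
- by apply: (lactS a f) Gf; rewrite diffop_genE.
- exact (diffop_ract a Gf).
Qed.

Definition comp_raises (n : nat) G :=
  forall m D, diffop m D -> diffop (n + m) (G \o D).

Lemma gen_comp_raises n S G :
  (forall H, S H -> comp_raises n H) -> gen S G -> comp_raises n G.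
Proof.
move=> Sn; elim=> {G} [H /Sn // | | f g _ fn _ gn | a f _ fn | a f _ fn] m D Dm.
- exact: diffop0.
- exact: diffopD (fn _ _ Dm) (gn _ _ Dm).
- exact: diffop_lact (fn _ _ Dm).
- exact: fn _ _ (diffop_lact a Dm).
Qed.

Lemma comp_raisesS n G : comp_raises n G -> comp_raises n.+1 G.
Proof. by move=> Gn m D /Gn; rewrite addSn; apply: diffopS. Qed.

Lemma comp_raises_Z0 G : Z0 G -> comp_raises 0 G.
Proof.
move=> ZG m; have linG : klinear G by case: ZG.
have lactS k a f : diffop k (G \o f) -> diffop k (G \o lact a f).
  have -> : G \o lact a f = lact a (G \o f).
    by extensionality x; rewrite /lact /= (Z0_lact ZG).
  exact: diffop_lact.
rewrite add0n; elim: m => [|m IHm].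
  apply: diffop_comp_ind => // [a f _|H ZH]; first exact: lactS.
  by apply: gen_in; apply: Z0_comp.
apply: diffop_comp_ind => // [a f _|H [/IHm /diffopS // | [linH dH]]].
  exact: lactS.
apply: gen_in; right; split; first exact: klinear_comp.
by move=> a; rewrite delta_comp_Z0l //; apply: IHm.
Qed.

Lemma comp_raises_delta n G :
  klinear G -> (forall a, comp_raises n (delta a G)) -> comp_raises n.+1 G.
Proof.
move=> linG dG m.
have lactS k a f : diffop k f ->
    diffop (n.+1 + k) (G \o f) -> diffop (n.+1 + k) (G \o lact a f).
  move=> kf Gf; rewrite comp_lact; apply: diffopB; first exact: diffop_lact.
  by rewrite addSn; apply/diffopS/dG.
elim: m => [|m IHm].
  apply: diffop_comp_ind => // [a f|H ZH]; first exact: lactS.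
  rewrite addSn; apply: gen_in; right; split.
    by apply: klinear_comp; last case: ZH.
  by move=> a; rewrite delta_comp_Z0r //; apply: dG; apply: gen_in.
apply: diffop_comp_ind => // [a f|H [/IHm | [linH dH]]]; first exact: lactS.
  by rewrite addnS; apply: diffopS.
rewrite addSn; apply: gen_in; right; split; first exact: klinear_comp.
move=> a; rewrite delta_comp //; apply: diffopD.
  by apply: dG; apply: gen_in; right.
by have := IHm _ (dH a); rewrite addSnnS.
Qed.

Lemma diffop_comp_raises n G : diffop n G -> comp_raises n G.
Proof.
elim: n G => [|n IHn] G; rewrite diffop_genE; apply: gen_comp_raises => H.
  exact: comp_raises_Z0.
case=> [/IHn/comp_raisesS // | [linH dH]].
by apply: comp_raises_delta => // a; apply: IHn.
Qed.

End DiffopComposition.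

Theorem proposition9 (K : comPzRingType) (A : algType K) (n m : nat)
  (D1 D2 : A -> A) :
  diffop n D1 -> diffop m D2 -> diffop (n + m) (D1 \o D2).
Proof. by move=> D1n D2m; apply: diffop_comp_raises D1n m D2 D2m. Qed.
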